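(* Let $\hat a,\hat b\in\hat{\mathbb Q}$ and suppose there exist $\hat q,\hat p\in\hat{\mathbb U}$ with $\hat a\hat q=\hat p\hat b$. Suppose $\hat a=\hat x^*\hat\lambda\hat x$ and $\hat b=\hat y^*\hat\mu\hat y$, where $\hat x,\hat y\in\hat{\mathbb U}$ and $\hat\lambda=\lambda_1+\lambda_2\varepsilon$, $\hat\mu=\mu_1+\mu_2\varepsilon\in\mathbb{DC}$ with $\lambda_1,\mu_1\notin\mathbb R$. For $\hat m\in\hat{\mathbb U}$ define $$Q(\hat m)=\hat x^*\,(\overline{\lambda_1}/|\lambda_1|)\big(1-\operatorname{Im}(\lambda_2\overline{\lambda_1}/|\lambda_1|^2)\,i\,\varepsilon\big)\,\hat m\,\hat y,$$ $$P(\hat m)=\hat x^*\,\hat m\,\big(1-\operatorname{Im}(\mu_2\overline{\mu_1}/|\mu_1|^2)\,i\,\varepsilon\big)(\overline{\mu_1}/|\mu_1|)\,\hat y.$$ Then $$\{(\hat q,\hat p)\in\hat{\mathbb U}\times\hat{\mathbb U}:\hat a\hat q=\hat p\hat b\}=\{(Q(\hat m),P(\hat m)):\hat m\in\hat{\mathbb U}\}.$$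
   Context: $\mathbb{Q}$ denotes the real quaternions with units $i,j,k$; complex numbers are identified with quaternions $a+bi$ (so $i$ above is the imaginary unit). $\varepsilon$ satisfies $\varepsilon\ne0$, $\varepsilon^2=0$ and commutes with quaternions. $\hat{\mathbb Q}$ is the set of dual quaternions $\tilde p_{st}+\tilde p_{\mathcal I}\varepsilon$ with quaternions $\tilde p_{st},\tilde p_{\mathcal I}$, conjugate $\hat p^*=\tilde p_{st}^*+\tilde p_{\mathcal I}^*\varepsilon$. $\mathbb{DC}$ is the set of dual complex numbers $a+b\varepsilon$, $a,b\in\mathbb C$. $\hat{\mathbb U}$ is the set of unit dual quaternions, i.e. $\hat p$ with $|\hat p|=1$, where $|\hat p|=|\tilde p_{st}|+\frac{\mathrm{sc}(\tilde p_{st}^*\tilde p_{\mathcal I})}{|\tilde p_{st}|}\varepsilon$ for $\tilde p_{st}\ne0$, $\mathrm{sc}(\tilde p)=\frac12(\tilde p+\tilde p^* )$; equivalently $\hat p^*\hat p=\hat p\hat p^*=1$. $\operatorname{Re},\operatorname{Im}$ are real and imaginary parts of complex numbers. *)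

From Stdlib Require Import Reals.
Open Scope R_scope.

Record quat := mkQ { q0 : R; q1 : R; q2 : R; q3 : R }.

Definition qadd (p q : quat) : quat :=
  mkQ (q0 p + q0 q) (q1 p + q1 q) (q2 p + q2 q) (q3 p + q3 q).

Definition qmul (p q : quat) : quat :=
  mkQ (q0 p * q0 q - q1 p * q1 q - q2 p * q2 q - q3 p * q3 q)
      (q0 p * q1 q + q1 p * q0 q + q2 p * q3 q - q3 p * q2 q)
      (q0 p * q2 q - q1 p * q3 q + q2 p * q0 q + q3 p * q1 q)
      (q0 p * q3 q + q1 p * q2 q - q2 p * q1 q + q3 p * q0 q).

Definition qconj (p : quat) : quat := mkQ (q0 p) (- q1 p) (- q2 p) (- q3 p).

Definition qzero : quat := mkQ 0 0 0 0.
Definition qone : quat := mkQ 1 0 0 0.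

(* Dual quaternions  p_st + p_I eps, eps^2 = 0, eps central. *)
Record dquat := mkDQ { dst : quat; dinf : quat }.

Definition dqmul (p q : dquat) : dquat :=
  mkDQ (qmul (dst p) (dst q)) (qadd (qmul (dst p) (dinf q)) (qmul (dinf p) (dst q))).

Definition dqconj (p : dquat) : dquat := mkDQ (qconj (dst p)) (qconj (dinf p)).

Definition dqone : dquat := mkDQ qone qzero.

Definition dq_unit (p : dquat) : Prop := dqmul (dqconj p) p = dqone /\ dqmul p (dqconj p) = dqone.

Record cplx := mkC { cRe : R; cIm : R }.
Definition cmul (z w : cplx) : cplx :=
  mkC (cRe z * cRe w - cIm z * cIm w) (cRe z * cIm w + cIm z * cRe w).
Definition cconj (z : cplx) : cplx := mkC (cRe z) (- cIm z).
Definition cabs (z : cplx) : R := sqrt (cRe z ^ 2 + cIm z ^ 2).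
Definition cscale (r : R) (z : cplx) : cplx := mkC (r * cRe z) (r * cIm z).
Definition c2q (z : cplx) : quat := mkQ (cRe z) (cIm z) 0 0.

Definition dc (z1 z2 : cplx) : dquat := mkDQ (c2q z1) (c2q z2).
Definition c2dq (z : cplx) : dquat := dc z (mkC 0 0).

Definition one_minus_ieps (t : R) : dquat := mkDQ qone (mkQ 0 (- t) 0 0).

Definition phase_inv (l1 : cplx) : cplx := cscale (/ cabs l1) (cconj l1).
Definition im_ratio (l1 l2 : cplx) : R := cIm (cscale (/ (cabs l1 ^ 2)) (cmul l2 (cconj l1))).

Definition Qmap (x y : dquat) (l1 l2 : cplx) (m : dquat) : dquat :=
  dqmul (dqmul (dqmul (dqmul (dqconj x) (c2dq (phase_inv l1)))
                      (one_minus_ieps (im_ratio l1 l2))) m) y.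

Definition Pmap (x y : dquat) (m1 m2 : cplx) (m : dquat) : dquat :=
  dqmul (dqmul (dqmul (dqmul (dqconj x) m) (one_minus_ieps (im_ratio m1 m2)))
               (c2dq (phase_inv m1))) y.

From Stdlib Require Import Reals Lra Nsatz.
Open Scope R_scope.

(* A dual complex number L = l1 + l2 eps with l1 <> 0 factors as L = |L| U^*, where |L| is a
   dual real number with positive real part and U = (conj l1 / |l1|) (1 - t i eps) is the unit
   used in the definition of Q; likewise for M = m1 + m2 eps.  Hence a = |L| u and b = |M| w
   with unit dual quaternions u, w.  A single solution of a q = p b forces a a^* = b b^*, that
   is |L|^2 = |M|^2 and so |L| = |M|; cancelling this invertible central factor, a q = p b
   becomes u q = p w, whose unit solutions are q = u^* n, p = n w^* with n a unit.
   Substituting n = x^* m y gives the pairs (Q m, P m). *)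

Ltac dq_ring :=
  repeat match goal with p : dquat |- _ => destruct p as [[? ? ? ?] [? ? ? ?]] end;
  cbv [dqmul dqconj dqone qmul qadd qconj qone qzero dc c2q]; simpl;
  f_equal; f_equal; ring.

Lemma dqmul_assoc p q r : dqmul p (dqmul q r) = dqmul (dqmul p q) r.
Proof. dq_ring. Qed.

Ltac dq_assoc := repeat rewrite dqmul_assoc; reflexivity.

Lemma dqmul_1_l p : dqmul dqone p = p.
Proof. dq_ring. Qed.

Lemma dqmul_1_r p : dqmul p dqone = p.
Proof. dq_ring. Qed.

Lemma dqconj_mul p q : dqconj (dqmul p q) = dqmul (dqconj q) (dqconj p).
Proof. dq_ring. Qed.

Lemma dqconj_involutive p : dqconj (dqconj p) = p.
Proof. dq_ring. Qed.

Lemma dq_unit_mul p q : dq_unit p -> dq_unit q -> dq_unit (dqmul p q).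
Proof.
  intros [Hp1 Hp2] [Hq1 Hq2]; split; rewrite dqconj_mul.
  - transitivity (dqmul (dqconj q) (dqmul (dqmul (dqconj p) p) q)); [dq_assoc|].
    now rewrite Hp1, dqmul_1_l.
  - transitivity (dqmul p (dqmul (dqmul q (dqconj q)) (dqconj p))); [dq_assoc|].
    now rewrite Hq2, dqmul_1_l.
Qed.

Lemma dq_unit_conj p : dq_unit p -> dq_unit (dqconj p).
Proof. intros [H1 H2]; split; rewrite dqconj_involutive; assumption. Qed.

Lemma dq_unit_conj_mul_l u z : dq_unit u -> dqmul (dqconj u) (dqmul u z) = z.
Proof. intros [H _]. rewrite dqmul_assoc, H. apply dqmul_1_l. Qed.

Lemma dq_unit_mul_conj_l u z : dq_unit u -> dqmul u (dqmul (dqconj u) z) = z.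
Proof. intros [_ H]. rewrite dqmul_assoc, H. apply dqmul_1_l. Qed.

Lemma dq_unit_mul_conj_r u z : dq_unit u -> dqmul (dqmul z u) (dqconj u) = z.
Proof. intros [_ H]. rewrite <- dqmul_assoc, H. apply dqmul_1_r. Qed.

Lemma dq_unit_conj_mul_r u z : dq_unit u -> dqmul (dqmul z (dqconj u)) u = z.
Proof. intros [H _]. rewrite <- dqmul_assoc, H. apply dqmul_1_r. Qed.

Lemma dq_unit_sandwich x w y : dq_unit x -> dq_unit w -> dq_unit y ->
  dq_unit (dqmul (dqmul (dqconj x) w) y).
Proof. intros Hx Hw Hy. apply dq_unit_mul; [apply dq_unit_mul|]; auto using dq_unit_conj. Qed.

Lemma dq_unit_solutions u w q p : dq_unit u -> dq_unit w ->
  (dq_unit q /\ dq_unit p /\ dqmul u q = dqmul p w) <->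
  (exists n, dq_unit n /\ q = dqmul (dqconj u) n /\ p = dqmul n (dqconj w)).
Proof.
  intros Hu Hw; split.
  - intros [Hq [Hp E]]. exists (dqmul u q). split; [|split].
    + now apply dq_unit_mul.
    + symmetry; now apply dq_unit_conj_mul_l.
    + rewrite E. symmetry; now apply dq_unit_mul_conj_r.
  - intros [n [Hn [-> ->]]]. split; [|split].
    + apply dq_unit_mul; auto using dq_unit_conj.
    + apply dq_unit_mul; auto using dq_unit_conj.
    + rewrite dq_unit_mul_conj_l, dq_unit_conj_mul_r; auto.
Qed.

Lemma dq_unit_reparam x y (P : dquat -> Prop) : dq_unit x -> dq_unit y ->
  (exists n, dq_unit n /\ P n) <->
  (exists m, dq_unit m /\ P (dqmul (dqmul (dqconj x) m) y)).
Proof.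
  intros Hx Hy; split.
  - intros [n [Hn HP]]. exists (dqmul (dqmul x n) (dqconj y)). split.
    + apply dq_unit_mul; [apply dq_unit_mul|]; auto using dq_unit_conj.
    + rewrite <- dqmul_assoc, dq_unit_conj_mul_r, dq_unit_conj_mul_l; auto.
  - intros [m [Hm HP]]. exists (dqmul (dqmul (dqconj x) m) y).
    split; auto using dq_unit_sandwich.
Qed.

Definition dreal (r0 r1 : R) : dquat := mkDQ (mkQ r0 0 0 0) (mkQ r1 0 0 0).

Lemma dreal_central r0 r1 p : dqmul (dreal r0 r1) p = dqmul p (dreal r0 r1).
Proof. unfold dreal; dq_ring. Qed.

Lemma dreal_mul a b c d : dqmul (dreal a b) (dreal c d) = dreal (a * c) (a * d + b * c).
Proof. unfold dreal; dq_ring. Qed.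

Lemma dqconj_dreal r0 r1 : dqconj (dreal r0 r1) = dreal r0 r1.
Proof. unfold dreal; dq_ring. Qed.

Lemma dreal_mul_cancel r0 r1 p q : r0 <> 0 ->
  dqmul (dreal r0 r1) p = dqmul (dreal r0 r1) q -> p = q.
Proof.
  intros Hr E.
  assert (Hinv : forall z, dqmul (dreal (/ r0) (- r1 / (r0 * r0))) (dqmul (dreal r0 r1) z) = z).
  { intro z. rewrite dqmul_assoc, dreal_mul.
    replace (/ r0 * r0) with 1 by (field; assumption).
    replace (/ r0 * r1 + - r1 / (r0 * r0) * r0) with 0 by (field; assumption).
    apply dqmul_1_l. }
  now rewrite <- (Hinv p), <- (Hinv q), E.
Qed.

Lemma dreal_sqr_inj r0 r1 s0 s1 : 0 < r0 -> 0 < s0 ->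
  dqmul (dreal r0 r1) (dreal r0 r1) = dqmul (dreal s0 s1) (dreal s0 s1) ->
  dreal r0 r1 = dreal s0 s1.
Proof.
  intros Hr Hs E. rewrite !dreal_mul in E. injection E as E0 E1.
  assert (r0 = s0) by nra. subst s0.
  assert (r1 = s1) by nra. now subst s1.
Qed.

Lemma dqmul_dreal_comm p r0 r1 w :
  dqmul p (dqmul (dreal r0 r1) w) = dqmul (dreal r0 r1) (dqmul p w).
Proof. rewrite dqmul_assoc, <- dreal_central. symmetry; apply dqmul_assoc. Qed.

Lemma dreal_mul_unit_norm r0 r1 u : dq_unit u ->
  dqmul (dqmul (dreal r0 r1) u) (dqconj (dqmul (dreal r0 r1) u))
  = dqmul (dreal r0 r1) (dreal r0 r1).
Proof.
  intros Hu. rewrite dqconj_mul, dqconj_dreal, dqmul_assoc.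
  now rewrite dq_unit_mul_conj_r.
Qed.

Lemma dreal_factor_unique r0 r1 s0 s1 u w q p : 0 < r0 -> 0 < s0 ->
  dq_unit u -> dq_unit w -> dq_unit q -> dq_unit p ->
  dqmul (dqmul (dreal r0 r1) u) q = dqmul p (dqmul (dreal s0 s1) w) ->
  dreal r0 r1 = dreal s0 s1.
Proof.
  intros Hr Hs Hu Hw Hq Hp E.
  rewrite <- (dqmul_assoc (dreal r0 r1)), dqmul_dreal_comm in E.
  apply dreal_sqr_inj; auto.
  rewrite <- (dreal_mul_unit_norm r0 r1 (dqmul u q)), <- (dreal_mul_unit_norm s0 s1 (dqmul p w)),
    E; auto using dq_unit_mul.
Qed.

Lemma dreal_factor_cancel r0 r1 u w q p : r0 <> 0 ->
  dqmul (dqmul (dreal r0 r1) u) q = dqmul p (dqmul (dreal r0 r1) w) <->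
  dqmul u q = dqmul p w.
Proof.
  intros Hr.
  rewrite <- (dqmul_assoc (dreal r0 r1)), dqmul_dreal_comm.
  split; [apply dreal_mul_cancel; assumption | intros ->; reflexivity].
Qed.

Lemma dreal_sandwich_polar x L W r0 r1 : dq_unit x -> dq_unit W ->
  dqmul L W = dreal r0 r1 ->
  dqmul (dqmul (dqconj x) L) x
  = dqmul (dreal r0 r1) (dqmul (dqmul (dqconj x) (dqconj W)) x).
Proof.
  intros Hx HW HL.
  rewrite <- (dq_unit_mul_conj_r W L HW), HL, dqmul_assoc, <- (dreal_central r0 r1 (dqconj x)).
  dq_assoc.
Qed.

Lemma c2dq_one_minus_ieps_comm z t :
  dqmul (c2dq z) (one_minus_ieps t) = dqmul (one_minus_ieps t) (c2dq z).
Proof. unfold c2dq, one_minus_ieps; dq_ring. Qed.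

Lemma cabs_sqr z : cabs z * cabs z = cRe z * cRe z + cIm z * cIm z.
Proof. unfold cabs. rewrite sqrt_sqrt; nra. Qed.

Lemma cabs_pos z : cIm z <> 0 -> 0 < cabs z.
Proof. intros H. unfold cabs. apply sqrt_lt_R0. nra. Qed.

Lemma c2dq_unit z : cRe z * cRe z + cIm z * cIm z = 1 -> dq_unit (c2dq z).
Proof.
  intros H. unfold dq_unit.
  cbv [dqmul dqconj dqone qmul qadd qconj qone qzero c2dq dc c2q]; simpl.
  split; f_equal; f_equal; lra.
Qed.

Lemma one_minus_ieps_unit t : dq_unit (one_minus_ieps t).
Proof. unfold dq_unit, one_minus_ieps. split; dq_ring. Qed.

Lemma phase_inv_norm l : 0 < cabs l ->
  cRe (phase_inv l) * cRe (phase_inv l) + cIm (phase_inv l) * cIm (phase_inv l) = 1.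
Proof.
  intros Hl. pose proof (cabs_sqr l) as Hn. unfold phase_inv, cscale, cconj; simpl.
  set (n := cabs l) in *. clearbody n.
  transitivity ((cRe l * cRe l + cIm l * cIm l) / (n * n)); [field; lra|].
  rewrite <- Hn. field. lra.
Qed.

Definition dc_phase_inv (l1 l2 : cplx) : dquat :=
  dqmul (c2dq (phase_inv l1)) (one_minus_ieps (im_ratio l1 l2)).

Definition dc_abs (l1 l2 : cplx) : dquat :=
  dreal (cabs l1) ((cRe l1 * cRe l2 + cIm l1 * cIm l2) / cabs l1).

Lemma dc_phase_inv_unit l1 l2 : 0 < cabs l1 -> dq_unit (dc_phase_inv l1 l2).
Proof.
  intros Hl. apply dq_unit_mul.
  - apply c2dq_unit, phase_inv_norm; assumption.
  - apply one_minus_ieps_unit.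
Qed.

Lemma dc_mul_phase_inv l1 l2 : 0 < cabs l1 ->
  dqmul (dc l1 l2) (dc_phase_inv l1 l2) = dc_abs l1 l2.
Proof.
  intros Hl. pose proof (cabs_sqr l1) as Hn.
  destruct l1 as [a b], l2 as [c d].
  cbv [dc_phase_inv dc_abs dreal dqmul qmul qadd dc c2dq c2q phase_inv cscale cconj
       one_minus_ieps im_ratio cmul qone] in *; simpl in *.
  set (n := cabs {| cRe := a; cIm := b |}) in *. clearbody n.
  f_equal; f_equal.
  all: field_simplify_eq; [simpl; nsatz | lra].
Qed.

Lemma Qmap_eq x y l1 l2 : dq_unit x -> forall m,
  Qmap x y l1 l2 m
  = dqmul (dqconj (dqmul (dqmul (dqconj x) (dqconj (dc_phase_inv l1 l2))) x))
          (dqmul (dqmul (dqconj x) m) y).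
Proof.
  intros Hx m. rewrite !dqconj_mul, !dqconj_involutive.
  transitivity (dqmul (dqmul (dqconj x)
    (dqmul (dc_phase_inv l1 l2) (dqmul x (dqmul (dqconj x) m)))) y); [|dq_assoc].
  rewrite dq_unit_mul_conj_l by assumption.
  unfold Qmap, dc_phase_inv. dq_assoc.
Qed.

Lemma Pmap_eq x y m1 m2 : dq_unit y -> forall m,
  Pmap x y m1 m2 m
  = dqmul (dqmul (dqmul (dqconj x) m) y)
          (dqconj (dqmul (dqmul (dqconj y) (dqconj (dc_phase_inv m1 m2))) y)).
Proof.
  intros Hy m. rewrite !dqconj_mul, !dqconj_involutive.
  transitivity (dqmul (dqmul (dqconj x) m)
    (dqmul (dqmul y (dqmul (dqconj y) (dc_phase_inv m1 m2))) y)); [|dq_assoc].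
  rewrite dq_unit_mul_conj_l by assumption.
  unfold Pmap, dc_phase_inv.
  rewrite c2dq_one_minus_ieps_comm.
  dq_assoc.
Qed.

Theorem theorem3p2 (a b x y : dquat) (l1 l2 m1 m2 : cplx) :
  (exists q p : dquat, dq_unit q /\ dq_unit p /\ dqmul a q = dqmul p b) ->
  dq_unit x -> dq_unit y ->
  a = dqmul (dqmul (dqconj x) (dc l1 l2)) x ->
  b = dqmul (dqmul (dqconj y) (dc m1 m2)) y ->
  cIm l1 <> 0 -> cIm m1 <> 0 ->
  forall q p : dquat,
    (dq_unit q /\ dq_unit p /\ dqmul a q = dqmul p b) <->
    (exists m : dquat, dq_unit m /\ q = Qmap x y l1 l2 m /\ p = Pmap x y m1 m2 m).
Proof.
  intros [q0 [p0 [Hq0 [Hp0 E0]]]] Hx Hy Ha Hb Hl Hm q p.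
  apply cabs_pos in Hl, Hm.
  set (u := dqmul (dqmul (dqconj x) (dqconj (dc_phase_inv l1 l2))) x).
  set (w := dqmul (dqmul (dqconj y) (dqconj (dc_phase_inv m1 m2))) y).
  assert (Hu : dq_unit u)
    by (apply dq_unit_sandwich; auto using dq_unit_conj, dc_phase_inv_unit).
  assert (Hw : dq_unit w)
    by (apply dq_unit_sandwich; auto using dq_unit_conj, dc_phase_inv_unit).
  assert (Ha' : a = dqmul (dc_abs l1 l2) u)
    by (rewrite Ha; apply dreal_sandwich_polar; auto using dc_phase_inv_unit, dc_mul_phase_inv).
  assert (Hb' : b = dqmul (dc_abs m1 m2) w)
    by (rewrite Hb; apply dreal_sandwich_polar; auto using dc_phase_inv_unit, dc_mul_phase_inv).
  unfold dc_abs in Ha', Hb'. rewrite Ha', Hb' in E0 |- *.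
  rewrite <- (dreal_factor_unique _ _ _ _ u w q0 p0 Hl Hm Hu Hw Hq0 Hp0 E0).
  rewrite dreal_factor_cancel, dq_unit_solutions, (dq_unit_reparam x y _ Hx Hy) by lra || assumption.
  split; intros [m [Hm' [-> ->]]]; exists m;
    rewrite (Qmap_eq x y l1 l2 Hx), (Pmap_eq x y m1 m2 Hy); auto.
Qed.
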